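(* Let $d\ge3$ be odd and $m$ an integer with $d+1<m$. Then for all $1\le i\le m-d$, \[ \eta(d,m+1,i)=\eta(d,m,i)+\eta(d,m,i-1)+\eta(d-2,m-1,i), \] where, by convention, $\eta(d,m,0)=\eta(d,m,m-d)=0$ (so for $i=1$ the identity reads $\eta(d,m+1,1)=\eta(d,m,1)+\eta(d-2,m-1,1)$ and for $i=m-d$ it reads $\eta(d,m+1,m-d)=\eta(d-2,m-1,m-d)+\eta(d,m,m-d-1)$).
   Context: For an odd integer $e\ge1$, an integer $n$ with $e+1<n$, and $1\le i\le n-e-1$, set \[ \eta(e,n,i)=\binom{n-[e/2]-2}{[e/2]+i}\binom{[e/2]+i-1}{[e/2]}, \] and $\eta(e,n,0)=\eta(e,n,n-e)=0$, where $[r]$ denotes the largest integer $\le r$. *)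

From mathcomp Require Import all_boot.
Set Implicit Arguments. Unset Strict Implicit. Unset Printing Implicit Defensive.

Definition eta (e n i : nat) : nat :=
  if (1 <= i) && (i <= n - e - 1)
  then 'C(n - e./2 - 2, e./2 + i) * 'C(e./2 + i - 1, e./2)
  else 0.

From mathcomp Require Import all_boot zify.

(* On the range 0 <= i <= n - e the guard in [eta] is redundant: the product
   of binomials already vanishes at both ends.  Writing d = 2k + 3, so that
   [d/2] = k + 1 and [(d-2)/2] = k, with N = m - k - 3 and s = k + i the last
   two terms share the factor C(N, s), and the identity becomes two
   applications of Pascal's rule, C(s-1, k+1) + C(s-1, k) = C(s, k+1)
   and C(N, s+1) + C(N, s) = C(N+1, s+1). *)

Definition eta_binom (h n i : nat) : nat :=
  'C(n - h - 2, h + i) * 'C(h + i - 1, h).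

Lemma eta_binomE (e n i : nat) :
  0 < e./2 + i -> i <= n - e -> eta e n i = eta_binom e./2 n i.
Proof.
move=> hi_gt0 hi; rewrite /eta /eta_binom.
have e_half : e = e./2.*2 + odd e by rewrite addnC odd_double_half.
case: ifP => // /negbT; rewrite negb_and -!ltnNge ltnS leqn0.
case/orP => [/eqP i0 | lt_i].
- by rewrite i0 addn0 (@bin_small (e./2 - 1)) ?muln0 //; lia.
- by rewrite bin_small //; lia.
Qed.

Lemma mul_binS_binS (N s h : nat) :
  'C(N.+1, s.+2) * 'C(s.+1, h.+1) =
  'C(N, s.+2) * 'C(s.+1, h.+1) + 'C(N, s.+1) * 'C(s, h.+1) + 'C(N, s.+1) * 'C(s, h).
Proof. by rewrite binS [in RHS]addnC binS !mulnDl mulnDr; lia. Qed.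

Lemma eta_binomS (k m i : nat) : k + 3 <= m -> 0 < i ->
  eta_binom k.+1 m.+1 i =
  eta_binom k.+1 m i + eta_binom k.+1 m (i - 1) + eta_binom k (m - 1) i.
Proof.
move=> km; case: i => // j _; rewrite /eta_binom.
have -> : m.+1 - k.+1 - 2 = (m - k.+1 - 2).+1 by lia.
have -> : m - 1 - k - 2 = m - k.+1 - 2 by lia.
have -> : k.+1 + j.+1 = (k + j).+2 by lia.
have -> : k.+1 + (j.+1 - 1) = (k + j).+1 by lia.
have -> : k + j.+1 = (k + j).+1 by lia.
rewrite !subn1 /=.
exact: mul_binS_binS.
Qed.

Theorem proposition6p2 (d m i : nat) :
  3 <= d -> odd d -> d + 1 < m -> 1 <= i -> i <= m - d ->
  eta d m.+1 i = eta d m i + eta d m (i - 1) + eta (d - 2) (m - 1) i.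
Proof.
move=> d_ge3 d_odd dm i_gt0 im.
have d_half : d = d./2.*2.+1 by rewrite -[LHS]odd_double_half d_odd.
have [k half_d] : exists k, d./2 = k.+1.
  by case: d./2 d_half => [|k] d_eq; [rewrite d_eq in d_ge3 | exists k].
have half_d2 : (d - 2)./2 = k.
  by rewrite d_half half_d doubleS subn2 /= uphalf_double.
rewrite !eta_binomE ?half_d ?half_d2; try lia.
by apply: eta_binomS; lia.
Qed.
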